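(* For each of the seven difference systems $a\mathcal{Q}3^{\delta}$, $a\mathcal{Q}2$, $a\mathcal{Q}1^{\delta}$, $a\mathcal{A}1^{\delta}$, $a\mathcal{H}3^{\delta}$, $a\mathcal{H}2$, $a\mathcal{H}1$ (taken with $n=2$), a Lax matrix is $$ L(u,s;p,\lambda) = \frac{1}{\sqrt{A}}\begin{bmatrix} \mathbf{0} & \mathbf{L}^1 \\ \mathbf{L}^2 & \mathbf{0} \end{bmatrix}, $$ where $\mathbf{L}^1,\mathbf{L}^2$ are $2\times 2$ matrices with $\det \mathbf{L}^1=\det \mathbf{L}^2 =c A$, $c$ some non-zero constant, and $\mathbf{L}^1,\mathbf{L}^2,A$ are: $a\mathcal{Q}3^{\delta}$: with $\Lambda:=\lambda-\frac{1}{\lambda}$, $P:=p-\frac{1}{p}$, $\mathbf{L}^1=\begin{bmatrix} \Lambda(s-u)+\left(-P+\frac{\lambda}{p}-\frac{p}{\lambda}\right)(s+u) & 2\Lambda\left(\delta P \left(\frac{\lambda}{p}-\frac{p}{\lambda}\right) +su\right)\\ -2P & \left(P+\frac{\lambda}{p}-\frac{p}{\lambda}\right)(s-u)+\Lambda(s+u)\end{bmatrix}$, $\mathbf{L}^2=\begin{bmatrix} -\Lambda (s-u)-\left(P+\frac{\lambda}{p}-\frac{p}{\lambda}\right)(s+u) & 2\Lambda\left(\delta P\left(\frac{p}{\lambda}-\frac{\lambda}{p}\right)+su\right)\\ 2P & \left(P+\frac{p}{\lambda}-\frac{\lambda}{p}\right)(s-u)-\Lambda(s+u)\end{bmatrix}$,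 $A=4\delta (1-p^2)^2+p(1+p)^2s^2-p(1-p)^2u^2$. $a\mathcal{Q}2$: $\mathbf{L}^1=\begin{bmatrix} (\lambda -p)(\lambda p-s)+pu & \lambda(-\lambda p+p^2+s)\left(p(p-\lambda)-u\right)+\lambda^3p(p-\lambda)\\ p & \lambda\left(p(p-\lambda)-s\right)\end{bmatrix}$, $\mathbf{L}^2=\begin{bmatrix} \lambda(-\lambda p+p^2+s) & \lambda(-\lambda p+p^2-s)\left(p(\lambda-p)+u\right)+\lambda^3p(\lambda-p)\\ -p & (\lambda-p)(\lambda p+s)+pu\end{bmatrix}$, $A=p^4+s^2-2p^2u$. $a\mathcal{Q}1^{\delta}$: $\mathbf{L}^1=\begin{bmatrix} -\lambda s+p(s+u) & \lambda\left(\delta p(\lambda-p)-su\right)\\ p & -\lambda s\end{bmatrix}$, $\mathbf{L}^2=\begin{bmatrix} \lambda s & \lambda\left(\delta p(p-\lambda)-su\right)\\ -p & \lambda s-p(s-u)\end{bmatrix}$, $A=\delta p^2-s^2$. $a\mathcal{A}1^{\delta}$: $\mathbf{L}^1=\begin{bmatrix} -\lambda u & \lambda\left(\delta p(\lambda-p)+su \right)\\ -p & p(s-u)+\lambda u\end{bmatrix}$, $\mathbf{L}^2=\begin{bmatrix} -\lambda u+p (s+u) & \lambda\left(\delta p (\lambda-p)-su\right)\\ -p & \lambda u\end{bmatrix}$, $A=\delta p^2-u^2$. $a\mathcal{H}3^{\delta}$: $\mathbf{L}^1=\begin{bmatrix} \lambda (s-u)-p(s+u) & 2\delta (p^2-\lambda^2)+2\lambda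 s u\\ -2p & p(s-u)+\lambda (s+u)\end{bmatrix}$, $\mathbf{L}^2=\begin{bmatrix} \lambda(s-u)+p(s+u) & 2\delta (p^2-\lambda^2)-2\lambda s u \\ -2p & -p(s-u)+\lambda (s+u)\end{bmatrix}$, $A=4\delta p+u^2-s^2$. $a\mathcal{H}2$: $\mathbf{L}^1=\begin{bmatrix} \lambda-p-u & \lambda^2+(s-p)(p+u)-\lambda(s-u)\\ -1 & -\lambda+p+s\end{bmatrix}$, $\mathbf{L}^2=\begin{bmatrix} \lambda-p+s & \lambda^2-(p+s)(p+u)+\lambda(s+u)\\ -1 & -\lambda+p+u\end{bmatrix}$, $A=p+u$. $a\mathcal{H}1$: $\mathbf{L}^1=\begin{bmatrix} -u & -\lambda+p+su\\ -1 & s\end{bmatrix}$, $\mathbf{L}^2=\begin{bmatrix} s & -\lambda+p-su\\ -1 & u\end{bmatrix}$, $A=1$.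
   Context: We consider difference systems in ''bond variables'' on the edges of a $\mathbb{Z}^2$ graph. For $i\neq j\in\{1,2\}$, $X^i,Y^i$ are fields on edges of direction $i$, $p^i$ are lattice parameters, and a subscript $j$ denotes a shift in direction $j$. With $n=2$ we identify $u:=X^1$, $s:=Y^1$, $v:=X^2$, $t:=Y^2$, $p:=p^1$, $q:=p^2$, $u_2:=X^1_2$, $s_2:=Y^1_2$, $v_1:=X^2_1$, $t_1:=Y^2_1$. The a-list of systems ($i\neq j\in\{1,2\}$, $\delta\in\{0,1\}$) is: $a\mathcal{Q}3^{\delta}$: $X^i_j= Y^i-2\frac{\delta a b c+(bY^i-aX^j)(Y^i-Y^j)+cY^iX^j}{2bY^i-(a+b+c)Y^j-(a-b-c)X^j}$, $Y^i_j=X^i-2\frac{\delta a b c+(bX^i-aX^j)(X^i+Y^j)+cX^iX^j}{2bX^i-(a-b+c)Y^j-(a+b-c)X^j}$, with $a:=p^i-\frac{1}{p^i}$, $b:=p^j-\frac{1}{p^j}$, $c:=\frac{p^i}{p^j}-\frac{p^j}{p^i}$. $a\mathcal{Q}2$: $X^i_j=X^j+(p^i-p^j)\frac{p^ip^j([p^i]^2-p^ip^j+[p^j]^2)+Y^iY^j-p^ip^j(Y^i-Y^j+2X^j)}{p^iY^j-p^jY^i+p^ip^j(p^i-p^j)}$, $Y^i_j=p^i\frac{p^j(p^i-p^j)([p^i]^2-p^ip^j+[p^j]^2-X^i-X^j-Y^j)+Y^j(X^i-X^j)}{(p^ip^j+Y^j)(p^i-p^j)-p^j(X^i-X^j)}$.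 $a\mathcal{Q}1^{\delta}$: $X^i_j=X^j+(p^i-p^j)\frac{\delta p^ip^j-Y^iY^j}{p^jY^i-p^iY^j}$, $Y^i_j=p^i\frac{\delta p^j(p^j-p^i)+Y^j(X^i-X^j)}{p^iY^j-p^j(X^i-X^j+Y^j)}$. $a\mathcal{A}1^{\delta}$: $X^i_j=p^i\frac{\delta p^j(p^i-p^j)+X^j(Y^j-Y^i)}{p^iX^j-p^j(Y^i+X^j-Y^j)}$, $Y^i_j=-Y^j+(p^i-p^j)\frac{\delta p^ip^j-X^iX^j}{p^iX^j-p^jX^i}$. $a\mathcal{H}3^{\delta}$: $X^i_j=\frac{(p^i-p^j)\left(2\delta (p^i+p^j)-Y^iY^j\right)+\left((p^i+p^j)Y^i-2p^iY^j\right)X^j}{p^j(2Y^i+X^j-Y^j)-p^i(X^j+Y^j)}$, $Y^i_j=\frac{2\delta ({p^j}^2-{p^i}^2)+p^iX^iY^j-p^iX^j(X^i+2Y^j)+p^jX^i(X^j+Y^j)}{p^i(X^j+Y^j)-p^j(2X^i-X^j+Y^j)}$. $a\mathcal{H}2$: $X^i_j=X^j-(p^i-p^j)\frac{p^i+p^j+Y^i-Y^j+2X^j}{p^i-p^j+Y^i-Y^j}$, $Y^i_j=p^i-p^j-Y^j-2(p^i-p^j)\frac{p^i+X^i}{p^i-p^j+X^i-X^j}$. $a\mathcal{H}1$: $X^i_j=X^j+\frac{p^i-p^j}{Y^i-Y^j}$, $Y^i_j=-Y^i+\frac{p^i-p^j}{X^i-X^j}$. A matrix $L(u,s;p,\lambda)$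 is called a Lax matrix of such a system (written as $u_2=f^1(s,v,t)$, $s_2=f^2(u,v,t)$, $v_1=f^3(u,s,t)$, $t_1=f^4(u,s,v)$) if these equations imply $L(u_2,s_2;p,\lambda)\,L(v,t;q,\lambda)=L(v_1,t_1;q,\lambda)\,L(u,s;p,\lambda)$ for all $\lambda$; this is the compatibility condition of $\Psi_1=L(u,s;p,\lambda)\Psi$, $\Psi_2=L(v,t;q,\lambda)\Psi$. *)

From HB Require Import structures.
From mathcomp Require Import all_boot all_order all_algebra.
Set Implicit Arguments. Unset Strict Implicit. Unset Printing Implicit Defensive.
Import Order.TTheory GRing.Theory Num.Theory.
Local Open Scope ring_scope.

Section Defs.
Variable C : numClosedFieldType.

Definition mx2 (a b c d : C) : 'M[C]_2 :=
  \matrix_(i < 2, j < 2)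
    if (i : nat) == 0%N then (if (j : nat) == 0%N then a else b)
    else (if (j : nat) == 0%N then c else d).

(* L = (1/r) [[0, L1], [L2, 0]], where r is a square root of A *)
Definition LaxM (L1 L2 : 'M[C]_2) (r : C) : 'M[C]_(2 + 2) :=
  r^-1 *: block_mx 0 L1 L2 0.

(* A system in bond variables, n = 2:  X^i_j = X Xi Yi Xj Yj pi pj,
   Y^i_j = Y Xi Yi Xj Yj pi pj; [dom Xi Yi Xj Yj pi pj] says that the
   denominators of both right-hand sides are non-zero.  [par] is the
   admissibility condition on lattice/spectral parameters.
   With u = X^1, s = Y^1, v = X^2, t = Y^2, p = p^1, q = p^2:
     u_2 = X u s v t p q, s_2 = Y u s v t p q,
     v_1 = X v t u s q p, t_1 = Y v t u s q p.
   L1 u s p lam, L2 u s p lam, A u s p are the data of the Lax matrix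
   L(u,s;p,lam) = 1/sqrt(A) [[0, L1], [L2, 0]].  The square roots are
   determined up to sign; the Lax equation is required for a suitable
   choice of the square roots (independent of lam, as A is). *)
Definition is_Lax_matrix (par : C -> Prop)
  (X Y : C -> C -> C -> C -> C -> C -> C)
  (dom : C -> C -> C -> C -> C -> C -> Prop)
  (L1 L2 : C -> C -> C -> C -> 'M[C]_2) (A : C -> C -> C -> C) : Prop :=
  forall u s v t p q : C, par p -> par q ->
  dom u s v t p q -> dom v t u s q p ->
  forall u2 s2 v1 t1 : C,
  u2 = X u s v t p q -> s2 = Y u s v t p q ->
  v1 = X v t u s q p -> t1 = Y v t u s q p ->
  A u s p != 0 -> A v t q != 0 -> A u2 s2 p != 0 -> A v1 t1 q != 0 ->
  exists r1 r2 r3 r4 : C,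
    [/\ r1 ^+ 2 = A u2 s2 p, r2 ^+ 2 = A v t q, r3 ^+ 2 = A v1 t1 q,
        r4 ^+ 2 = A u s p &
        forall lam : C, par lam ->
          LaxM (L1 u2 s2 p lam) (L2 u2 s2 p lam) r1
            *m LaxM (L1 v t q lam) (L2 v t q lam) r2
          = LaxM (L1 v1 t1 q lam) (L2 v1 t1 q lam) r3
            *m LaxM (L1 u s p lam) (L2 u s p lam) r4].

Definition det_cond (par : C -> Prop) (L1 L2 : C -> C -> C -> C -> 'M[C]_2)
  (A : C -> C -> C -> C) : Prop :=
  exists c : C -> C -> C,
    (exists p lam : C, [/\ par p, par lam & c p lam != 0]) /\
    forall u s p lam : C, par p -> par lam ->
      \det (L1 u s p lam) = c p lam * A u s p /\
      \det (L2 u s p lam) = c p lam * A u s p.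

Definition anypar : C -> Prop := fun _ => True.
Definition nzpar : C -> Prop := fun x => x != 0.

Definition Q3a (pi : C) := pi - pi^-1.
Definition Q3c (pi pj : C) := pi / pj - pj / pi.
Definition Q3X (d : C) (Xi Yi Xj Yj pi pj : C) : C :=
  let a := Q3a pi in let b := Q3a pj in let c := Q3c pi pj in
  Yi - 2 * (d * a * b * c + (b * Yi - a * Xj) * (Yi - Yj) + c * Yi * Xj)
       / (2 * b * Yi - (a + b + c) * Yj - (a - b - c) * Xj).
Definition Q3Y (d : C) (Xi Yi Xj Yj pi pj : C) : C :=
  let a := Q3a pi in let b := Q3a pj in let c := Q3c pi pj in
  Xi - 2 * (d * a * b * c + (b * Xi - a * Xj) * (Xi + Yj) + c * Xi * Xj)
       / (2 * b * Xi - (a - b + c) * Yj - (a + b - c) * Xj).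
Definition Q3dom (Xi Yi Xj Yj pi pj : C) : Prop :=
  let a := Q3a pi in let b := Q3a pj in let c := Q3c pi pj in
  2 * b * Yi - (a + b + c) * Yj - (a - b - c) * Xj != 0 /\
  2 * b * Xi - (a - b + c) * Yj - (a + b - c) * Xj != 0.
Definition Q3L1 (d : C) (u s p lam : C) : 'M[C]_2 :=
  let La := lam - lam^-1 in let P := p - p^-1 in
  mx2 (La * (s - u) + (- P + lam / p - p / lam) * (s + u))
      (2 * La * (d * P * (lam / p - p / lam) + s * u))
      (- 2 * P)
      ((P + lam / p - p / lam) * (s - u) + La * (s + u)).
Definition Q3L2 (d : C) (u s p lam : C) : 'M[C]_2 :=
  let La := lam - lam^-1 in let P := p - p^-1 in
  mx2 (- La * (s - u) - (P + lam / p - p / lam) * (s + u))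
      (2 * La * (d * P * (p / lam - lam / p) + s * u))
      (2 * P)
      ((P + p / lam - lam / p) * (s - u) - La * (s + u)).
Definition Q3A (d : C) (u s p : C) : C :=
  4 * d * (1 - p ^+ 2) ^+ 2 + p * (1 + p) ^+ 2 * s ^+ 2
  - p * (1 - p) ^+ 2 * u ^+ 2.

Definition Q2X (Xi Yi Xj Yj pi pj : C) : C :=
  Xj + (pi - pj) * (pi * pj * (pi ^+ 2 - pi * pj + pj ^+ 2) + Yi * Yj
                    - pi * pj * (Yi - Yj + 2 * Xj))
       / (pi * Yj - pj * Yi + pi * pj * (pi - pj)).
Definition Q2Y (Xi Yi Xj Yj pi pj : C) : C :=
  pi * (pj * (pi - pj) * (pi ^+ 2 - pi * pj + pj ^+ 2 - Xi - Xj - Yj)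
        + Yj * (Xi - Xj))
     / ((pi * pj + Yj) * (pi - pj) - pj * (Xi - Xj)).
Definition Q2dom (Xi Yi Xj Yj pi pj : C) : Prop :=
  pi * Yj - pj * Yi + pi * pj * (pi - pj) != 0 /\
  (pi * pj + Yj) * (pi - pj) - pj * (Xi - Xj) != 0.
Definition Q2L1 (u s p lam : C) : 'M[C]_2 :=
  mx2 ((lam - p) * (lam * p - s) + p * u)
      (lam * (- lam * p + p ^+ 2 + s) * (p * (p - lam) - u)
        + lam ^+ 3 * p * (p - lam))
      p
      (lam * (p * (p - lam) - s)).
Definition Q2L2 (u s p lam : C) : 'M[C]_2 :=
  mx2 (lam * (- lam * p + p ^+ 2 + s))
      (lam * (- lam * p + p ^+ 2 - s) * (p * (lam - p) + u)
        + lam ^+ 3 * p * (lam - p))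
      (- p)
      ((lam - p) * (lam * p + s) + p * u).
Definition Q2A (u s p : C) : C := p ^+ 4 + s ^+ 2 - 2 * p ^+ 2 * u.

Definition Q1X (d : C) (Xi Yi Xj Yj pi pj : C) : C :=
  Xj + (pi - pj) * (d * pi * pj - Yi * Yj) / (pj * Yi - pi * Yj).
Definition Q1Y (d : C) (Xi Yi Xj Yj pi pj : C) : C :=
  pi * (d * pj * (pj - pi) + Yj * (Xi - Xj)) / (pi * Yj - pj * (Xi - Xj + Yj)).
Definition Q1dom (Xi Yi Xj Yj pi pj : C) : Prop :=
  pj * Yi - pi * Yj != 0 /\ pi * Yj - pj * (Xi - Xj + Yj) != 0.
Definition Q1L1 (d : C) (u s p lam : C) : 'M[C]_2 :=
  mx2 (- lam * s + p * (s + u)) (lam * (d * p * (lam - p) - s * u))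
      p (- lam * s).
Definition Q1L2 (d : C) (u s p lam : C) : 'M[C]_2 :=
  mx2 (lam * s) (lam * (d * p * (p - lam) - s * u))
      (- p) (lam * s - p * (s - u)).
Definition Q1A (d : C) (u s p : C) : C := d * p ^+ 2 - s ^+ 2.

Definition A1X (d : C) (Xi Yi Xj Yj pi pj : C) : C :=
  pi * (d * pj * (pi - pj) + Xj * (Yj - Yi)) / (pi * Xj - pj * (Yi + Xj - Yj)).
Definition A1Y (d : C) (Xi Yi Xj Yj pi pj : C) : C :=
  - Yj + (pi - pj) * (d * pi * pj - Xi * Xj) / (pi * Xj - pj * Xi).
Definition A1dom (Xi Yi Xj Yj pi pj : C) : Prop :=
  pi * Xj - pj * (Yi + Xj - Yj) != 0 /\ pi * Xj - pj * Xi != 0.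
Definition A1L1 (d : C) (u s p lam : C) : 'M[C]_2 :=
  mx2 (- lam * u) (lam * (d * p * (lam - p) + s * u))
      (- p) (p * (s - u) + lam * u).
Definition A1L2 (d : C) (u s p lam : C) : 'M[C]_2 :=
  mx2 (- lam * u + p * (s + u)) (lam * (d * p * (lam - p) - s * u))
      (- p) (lam * u).
Definition A1A (d : C) (u s p : C) : C := d * p ^+ 2 - u ^+ 2.

Definition H3X (d : C) (Xi Yi Xj Yj pi pj : C) : C :=
  ((pi - pj) * (2 * d * (pi + pj) - Yi * Yj) + ((pi + pj) * Yi - 2 * pi * Yj) * Xj)
  / (pj * (2 * Yi + Xj - Yj) - pi * (Xj + Yj)).
Definition H3Y (d : C) (Xi Yi Xj Yj pi pj : C) : C :=
  (2 * d * (pj ^+ 2 - pi ^+ 2) + pi * Xi * Yj - pi * Xj * (Xi + 2 * Yj)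
   + pj * Xi * (Xj + Yj))
  / (pi * (Xj + Yj) - pj * (2 * Xi - Xj + Yj)).
Definition H3dom (Xi Yi Xj Yj pi pj : C) : Prop :=
  pj * (2 * Yi + Xj - Yj) - pi * (Xj + Yj) != 0 /\
  pi * (Xj + Yj) - pj * (2 * Xi - Xj + Yj) != 0.
Definition H3L1 (d : C) (u s p lam : C) : 'M[C]_2 :=
  mx2 (lam * (s - u) - p * (s + u)) (2 * d * (p ^+ 2 - lam ^+ 2) + 2 * lam * s * u)
      (- 2 * p) (p * (s - u) + lam * (s + u)).
Definition H3L2 (d : C) (u s p lam : C) : 'M[C]_2 :=
  mx2 (lam * (s - u) + p * (s + u)) (2 * d * (p ^+ 2 - lam ^+ 2) - 2 * lam * s * u)
      (- 2 * p) (- p * (s - u) + lam * (s + u)).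
Definition H3A (d : C) (u s p : C) : C := 4 * d * p + u ^+ 2 - s ^+ 2.

Definition H2X (Xi Yi Xj Yj pi pj : C) : C :=
  Xj - (pi - pj) * (pi + pj + Yi - Yj + 2 * Xj) / (pi - pj + Yi - Yj).
Definition H2Y (Xi Yi Xj Yj pi pj : C) : C :=
  pi - pj - Yj - 2 * (pi - pj) * (pi + Xi) / (pi - pj + Xi - Xj).
Definition H2dom (Xi Yi Xj Yj pi pj : C) : Prop :=
  pi - pj + Yi - Yj != 0 /\ pi - pj + Xi - Xj != 0.
Definition H2L1 (u s p lam : C) : 'M[C]_2 :=
  mx2 (lam - p - u) (lam ^+ 2 + (s - p) * (p + u) - lam * (s - u))
      (- 1) (- lam + p + s).
Definition H2L2 (u s p lam : C) : 'M[C]_2 :=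
  mx2 (lam - p + s) (lam ^+ 2 - (p + s) * (p + u) + lam * (s + u))
      (- 1) (- lam + p + u).
Definition H2A (u s p : C) : C := p + u.

Definition H1X (Xi Yi Xj Yj pi pj : C) : C := Xj + (pi - pj) / (Yi - Yj).
Definition H1Y (Xi Yi Xj Yj pi pj : C) : C := - Yj + (pi - pj) / (Xi - Xj).
Definition H1dom (Xi Yi Xj Yj pi pj : C) : Prop := Yi - Yj != 0 /\ Xi - Xj != 0.
Definition H1L1 (u s p lam : C) : 'M[C]_2 :=
  mx2 (- u) (- lam + p + s * u) (- 1) s.
Definition H1L2 (u s p lam : C) : 'M[C]_2 :=
  mx2 s (- lam + p - s * u) (- 1) u.
Definition H1A (u s p : C) : C := 1.

End Defs.

From HB Require Import structures.
From mathcomp Require Import all_boot all_order all_algebra.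
From mathcomp Require Import ring.
Import Order.TTheory GRing.Theory Num.Theory.
Local Open Scope ring_scope.

(* Since L(u,s;p,lam) = A^(-1/2) [[0, L1], [L2, 0]] is block off-diagonal, both
   sides of the Lax equation are block diagonal, and it suffices that
     L1(u2,s2;p) L2(v,t;q) = k L1(v1,t1;q) L2(u,s;p),
     L2(u2,s2;p) L1(v,t;q) = k L2(v1,t1;q) L1(u,s;p)
   for a scalar k independent of lam.  For every system, k is a factor depending
   on p, q times the ratio of the denominators of the map and of A between the
   two orderings of the quadrilateral, and both identities are rational
   identities, checked entrywise.  Taking determinants at a lam where the factor
   c of det L1 = det L2 = c A vanishes neither at p nor at q yields
   k^2 A(v1,t1;q) A(u,s;p) = A(u2,s2;p) A(v,t;q), which is exactly what is needed
   to choose the square roots of the four values of A so that the scalar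
   prefactors of both sides agree. *)

Lemma exists_notin {R : numDomainType} (xs : seq R) : exists x : R, x \notin xs.
Proof.
have [M [M_ge0 M_gt]] : exists M : R, 0 <= M /\ forall x, x \in xs -> `|x| < M.
  elim: xs => [|y xs [M [M_ge0 M_gt]]]; first by exists 0.
  exists (M + 1 + `|y|); split=> [|x]; first by rewrite !addr_ge0.
  rewrite inE => /predU1P [->|/M_gt x_lt]; first by rewrite ltrDr ltr_wpDl.
  by rewrite (lt_le_trans x_lt) // -addrA lerDl addr_ge0.
by exists M; apply/negP => /M_gt; rewrite ger0_norm // ltxx.
Qed.

Section LaxMatrices.
Variable C : numClosedFieldType.

Lemma mx2_mul (a b c d a' b' c' d' : C) :
  mx2 a b c d *m mx2 a' b' c' d' =
  mx2 (a * a' + b * c') (a * b' + b * d') (c * a' + d * c') (c * b' + d * d').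
Proof.
apply/matrixP => i j; rewrite !mxE !big_ord_recr big_ord0 /= !mxE add0r.
by case: i => [[|[|//]] ?]; case: j => [[|[|//]] ?].
Qed.

Lemma mx2_scale (k a b c d : C) : k *: mx2 a b c d = mx2 (k * a) (k * b) (k * c) (k * d).
Proof. by apply/matrixP => i j; rewrite !mxE; case: ifP; case: ifP. Qed.

Lemma det_mx2 (a b c d : C) : \det (mx2 a b c d) = a * d - b * c.
Proof.
rewrite (expand_det_row _ 0) !big_ord_recr big_ord0 /= add0r.
by rewrite /cofactor !det_mx11 !mxE /= expr0 expr1 !mul1r mulN1r; ring.
Qed.

Lemma mulmx_LaxM (P1 P2 Q1 Q2 : 'M[C]_2) (r1 r2 : C) :
  LaxM P1 P2 r1 *m LaxM Q1 Q2 r2 =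
  (r1 * r2)^-1 *: block_mx (P1 *m Q2) 0 0 (P2 *m Q1).
Proof.
rewrite /LaxM -scalemxAl -scalemxAr scalerA invfM mulmx_block.
by rewrite !mulmx0 !mul0mx !addr0 !add0r.
Qed.

Section FromFactorization.
Variables (par : C -> Prop) (X Y : C -> C -> C -> C -> C -> C -> C).
Variable dom : C -> C -> C -> C -> C -> C -> Prop.
Variables (L1 L2 : C -> C -> C -> C -> 'M[C]_2) (A : C -> C -> C -> C).

Definition factorizes : Prop :=
  forall u s v t p q : C, par p -> par q ->
  dom u s v t p q -> dom v t u s q p ->
  A u s p != 0 -> A v t q != 0 ->
  A (X u s v t p q) (Y u s v t p q) p != 0 ->
  A (X v t u s q p) (Y v t u s q p) q != 0 ->
  exists k : C, forall lam : C, par lam ->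
    L1 (X u s v t p q) (Y u s v t p q) p lam *m L2 v t q lam
      = k *: (L1 (X v t u s q p) (Y v t u s q p) q lam *m L2 u s p lam) /\
    L2 (X u s v t p q) (Y u s v t p q) p lam *m L1 v t q lam
      = k *: (L2 (X v t u s q p) (Y v t u s q p) q lam *m L1 u s p lam).

Definition cofinitely_nonzero (c : C -> C -> C) : Prop :=
  forall p, par p -> exists zs : seq C, forall lam, lam \notin zs -> par lam /\ c p lam != 0.

Definition det_factors (c : C -> C -> C) : Prop :=
  forall u s p lam, par p -> par lam ->
    \det (L1 u s p lam) = c p lam * A u s p /\ \det (L2 u s p lam) = c p lam * A u s p.

Variable c : C -> C -> C.
Hypotheses (detL_cA : det_factors c) (c_cofinite : cofinitely_nonzero c).

Lemma det_cond_of_det_factors : par 1 -> det_cond par L1 L2 A.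
Proof.
move=> par1; exists c; split=> //.
have [zs zsP] := c_cofinite _ par1; have [lam /zsP [par_lam c1_neq0]] := exists_notin zs.
by exists 1, lam.
Qed.

Lemma Lax_equation_of_scaled_factorization {u s v t p q u2 s2 v1 t1 k : C} :
  A u s p != 0 -> A v t q != 0 -> A v1 t1 q != 0 -> A u2 s2 p != 0 ->
  k ^+ 2 * A v1 t1 q * A u s p = A u2 s2 p * A v t q ->
  (forall lam, par lam ->
     L1 u2 s2 p lam *m L2 v t q lam = k *: (L1 v1 t1 q lam *m L2 u s p lam) /\
     L2 u2 s2 p lam *m L1 v t q lam = k *: (L2 v1 t1 q lam *m L1 u s p lam)) ->
  exists r1 r2 r3 r4 : C,
    [/\ r1 ^+ 2 = A u2 s2 p, r2 ^+ 2 = A v t q, r3 ^+ 2 = A v1 t1 q,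
        r4 ^+ 2 = A u s p &
        forall lam : C, par lam ->
          LaxM (L1 u2 s2 p lam) (L2 u2 s2 p lam) r1
            *m LaxM (L1 v t q lam) (L2 v t q lam) r2
          = LaxM (L1 v1 t1 q lam) (L2 v1 t1 q lam) r3
            *m LaxM (L1 u s p lam) (L2 u s p lam) r4].
Proof.
move=> Au_neq0 Av_neq0 Av1_neq0 Au2_neq0 k2E factor.
have k_neq0 : k != 0.
  apply: contraNneq Au2_neq0 => k0; move: k2E.
  by rewrite k0 expr0n !mul0r => /esym/eqP; rewrite mulf_eq0 (negbTE Av_neq0) orbF.
pose r2 := sqrtC (A v t q); pose r3 := sqrtC (A v1 t1 q); pose r4 := sqrtC (A u s p).
exists (k * r3 * r4 / r2), r2, r3, r4; split; rewrite ?sqrtCK //.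
  by rewrite !exprMn exprVn !sqrtCK; apply: (mulIf Av_neq0); rewrite -k2E divfK.
move=> lam par_lam; rewrite !mulmx_LaxM; have [-> ->] := factor lam par_lam.
have scale_diag (M N : 'M[C]_2) : block_mx (k *: M) 0 0 (k *: N) = k *: block_mx M 0 0 N.
  by rewrite scale_block_mx !scaler0.
rewrite scale_diag scalerA; congr (_ *: _).
by field; rewrite !sqrtC_eq0 Av_neq0 Av1_neq0 Au_neq0 k_neq0.
Qed.

Theorem is_Lax_matrix_of_factorization : factorizes -> is_Lax_matrix par X Y dom L1 L2 A.
Proof.
move=> fact u s v t p q par_p par_q dom_uv dom_vu u2 s2 v1 t1 -> -> -> -> Au Av Au2 Av1.
have [k factor] := fact u s v t p q par_p par_q dom_uv dom_vu Au Av Au2 Av1.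
apply: (Lax_equation_of_scaled_factorization Au Av Av1 Au2 _ factor).
have [zp zpP] := c_cofinite _ par_p; have [zq zqP] := c_cofinite _ par_q.
have [lam] := exists_notin (zp ++ zq).
rewrite mem_cat negb_or => /andP [/zpP [par_lam cp_neq0] /zqP [_ cq_neq0]].
have [/(congr1 determinant) detE _] := factor lam par_lam.
rewrite detZ !det_mulmx (detL_cA _ _ _ _ par_p par_lam).1 (detL_cA _ _ _ _ par_q par_lam).2 in detE.
rewrite (detL_cA _ _ _ _ par_q par_lam).1 (detL_cA _ _ _ _ par_p par_lam).2 in detE.
apply: (mulIf (mulf_neq0 cp_neq0 cq_neq0)).
transitivity (k ^+ 2 * (c q lam * A (X v t u s q p) (Y v t u s q p) q * (c p lam * A u s p))).
  by ring.
by rewrite -detE; ring.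
Qed.

Corollary Lax_and_det_cond_of_factorization :
  par 1 -> factorizes -> is_Lax_matrix par X Y dom L1 L2 A /\ det_cond par L1 L2 A.
Proof.
move=> par1 fact.
by split; [apply: is_Lax_matrix_of_factorization | apply: det_cond_of_det_factors].
Qed.

End FromFactorization.

Definition gauge_factor (rho : C -> C -> C) (denX denY : C -> C -> C -> C -> C -> C -> C)
    (A : C -> C -> C -> C) (u s v t p q : C) : C :=
  rho p q * (denX v t u s q p * denY v t u s q p * A v t q)
    / (denX u s v t p q * denY u s v t p q * A u s p).

Definition biaffine (F : C -> C -> 'M[C]_2) : Prop :=
  forall x y, F x y = F 0 0 + x *: (F 1 0 - F 0 0) + y *: (F 0 1 - F 0 0)
                      + (x * y) *: (F 1 1 - F 1 0 - F 0 1 + F 0 0).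

Definition homogenize (F : C -> C -> 'M[C]_2) (Nx Dx Ny Dy : C) : 'M[C]_2 :=
  (Dx * Dy) *: F 0 0 + (Nx * Dy) *: (F 1 0 - F 0 0) + (Dx * Ny) *: (F 0 1 - F 0 0)
  + (Nx * Ny) *: (F 1 1 - F 1 0 - F 0 1 + F 0 0).

Lemma homogenize_frac F Nx Dx Ny Dy : biaffine F -> Dx != 0 -> Dy != 0 ->
  F (Nx / Dx) (Ny / Dy) = (Dx * Dy)^-1 *: homogenize F Nx Dx Ny Dy.
Proof.
move=> F_biaffine Dx_neq0 Dy_neq0; rewrite F_biaffine /homogenize.
by apply/matrixP => i j; rewrite !mxE; field; rewrite Dx_neq0 Dy_neq0.
Qed.

Lemma rescale_factorization (a b alpha beta k : C) (M M' : 'M[C]_2) :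
  alpha != 0 -> alpha *: M = beta *: M' -> k / b = beta / (alpha * a) ->
  a^-1 *: M = k *: (b^-1 *: M').
Proof.
move=> alpha_neq0 ME kE; rewrite scalerA kE -[M](scalerK alpha_neq0) ME !scalerA.
by congr (_ *: _); rewrite invfM; ring.
Qed.

Lemma sub_div_frac (x n D : C) : D != 0 -> x - n / D = (x * D - n) / D.
Proof. by move=> D_neq0; field. Qed.

(* Each side condition left by [field] is a nonvanishing hypothesis up to sign. *)
Ltac neq0_from_hyps :=
  match goal with
  | |- is_true (_ && _) => apply/andP; split; neq0_from_hyps
  | |- _ => done
  | h : is_true (?D != 0) |- is_true (?E != 0) =>
      first [ have -> : E = D by ring | have -> : E = - D by ring; rewrite oppr_eq0 ]; exact: h
  end.

Definition H1denX (u s v t p q : C) := s - t.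
Definition H1denY (u s v t p q : C) := u - v.

Lemma H1_det_factors :
  det_factors (@anypar C) (@H1L1 C) (@H1L2 C) (@H1A C) (fun p lam => p - lam).
Proof. by move=> u s p lam _ _; rewrite !det_mx2 /H1A; split; ring. Qed.

Lemma H1_cofinite : cofinitely_nonzero (@anypar C) (fun p lam => p - lam).
Proof. by move=> p _; exists [:: p] => lam; rewrite inE subr_eq0 eq_sym. Qed.

Lemma H1_factorizes :
  factorizes (@anypar C) (@H1X C) (@H1Y C) (@H1dom C) (@H1L1 C) (@H1L2 C) (@H1A C).
Proof.
move=> u s v t p q _ _ [DX DY] [DX' DY'] _ _ _ _.
exists (gauge_factor (fun _ _ => 1) H1denX H1denY (@H1A C) u s v t p q) => lam _.
rewrite /H1L1 /H1L2 !mx2_mul !mx2_scale /gauge_factor /H1denX /H1denY /H1X /H1Y /H1A.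
by split; congr mx2; field; neq0_from_hyps.
Qed.

Definition H2denX (u s v t p q : C) := p - q + s - t.
Definition H2denY (u s v t p q : C) := p - q + u - v.

Lemma H2_det_factors :
  det_factors (@anypar C) (@H2L1 C) (@H2L2 C) (@H2A C) (fun p lam => 2 * (lam - p)).
Proof. by move=> u s p lam _ _; rewrite !det_mx2 /H2A; split; ring. Qed.

Lemma H2_cofinite : cofinitely_nonzero (@anypar C) (fun p lam => 2 * (lam - p)).
Proof.
move=> p _; exists [:: p] => lam; rewrite inE => lam_neq_p.
by split; rewrite // mulf_neq0 ?pnatr_eq0 ?subr_eq0.
Qed.

Lemma H2_factorizes :
  factorizes (@anypar C) (@H2X C) (@H2Y C) (@H2dom C) (@H2L1 C) (@H2L2 C) (@H2A C).
Proof.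
move=> u s v t p q _ _ [DX DY] [DX' DY'] Au Av _ _.
exists (gauge_factor (fun _ _ => 1) H2denX H2denY (@H2A C) u s v t p q) => lam _.
move: Au Av; rewrite /H2L1 /H2L2 !mx2_mul !mx2_scale.
rewrite /gauge_factor /H2denX /H2denY /H2X /H2Y /H2A => Au Av.
by split; congr mx2; field; neq0_from_hyps.
Qed.

Definition H3denX (u s v t p q : C) := q * (2 * s + v - t) - p * (v + t).
Definition H3denY (u s v t p q : C) := p * (v + t) - q * (2 * u - v + t).

Lemma H3_det_factors d :
  det_factors (@anypar C) (H3L1 d) (H3L2 d) (H3A d) (fun p lam => p ^+ 2 - lam ^+ 2).
Proof. by move=> u s p lam _ _; rewrite !det_mx2 /H3A; split; ring. Qed.

Lemma H3_cofinite : cofinitely_nonzero (@anypar C) (fun p lam => p ^+ 2 - lam ^+ 2).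
Proof.
move=> p _; exists [:: p; - p] => lam; rewrite !inE negb_or => /andP [lam_neq_p lam_neq_Np].
split; rewrite // subr_sqr mulf_neq0 //; first by rewrite subr_eq0 eq_sym.
by rewrite addr_eq0 -eqr_oppLR eq_sym.
Qed.

Lemma H3_factorizes d :
  factorizes (@anypar C) (H3X d) (H3Y d) (@H3dom C) (H3L1 d) (H3L2 d) (H3A d).
Proof.
move=> u s v t p q _ _ [DX DY] [DX' DY'] Au Av _ _.
exists (gauge_factor (fun _ _ => 1) H3denX H3denY (H3A d) u s v t p q) => lam _.
move: Au Av; rewrite /H3L1 /H3L2 !mx2_mul !mx2_scale.
rewrite /gauge_factor /H3denX /H3denY /H3X /H3Y /H3A => Au Av.
by split; congr mx2; field; neq0_from_hyps.
Qed.

Definition Q1denX (u s v t p q : C) := q * s - p * t.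
Definition Q1denY (u s v t p q : C) := p * t - q * (u - v + t).

Lemma Q1_det_factors d :
  det_factors (@anypar C) (Q1L1 d) (Q1L2 d) (Q1A d) (fun p lam => lam * (p - lam)).
Proof. by move=> u s p lam _ _; rewrite !det_mx2 /Q1A; split; ring. Qed.

Lemma Q1_cofinite : cofinitely_nonzero (@anypar C) (fun p lam => lam * (p - lam)).
Proof.
move=> p _; exists [:: 0; p] => lam; rewrite !inE negb_or => /andP [lam_neq0 lam_neq_p].
by split; rewrite // mulf_neq0 // subr_eq0 eq_sym.
Qed.

Lemma Q1A_shift_p0 (d u s v t q : C) : Q1A d (Q1X d u s v t 0 q) (Q1Y d u s v t 0 q) 0 = 0.
Proof. by rewrite /Q1A /Q1Y; ring. Qed.

Lemma Q1_factorizes d :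
  factorizes (@anypar C) (Q1X d) (Q1Y d) (@Q1dom C) (Q1L1 d) (Q1L2 d) (Q1A d).
Proof.
move=> u s v t p q _ _ [DX DY] [DX' DY'] Au Av _ Av1.
have q_neq0 : q != 0 by apply: contraNneq Av1 => ->; rewrite Q1A_shift_p0.
exists (gauge_factor (fun p q => p / q) Q1denX Q1denY (Q1A d) u s v t p q) => lam _.
move: Au Av; rewrite /Q1L1 /Q1L2 !mx2_mul !mx2_scale.
rewrite /gauge_factor /Q1denX /Q1denY /Q1X /Q1Y /Q1A => Au Av.
by split; congr mx2; field; neq0_from_hyps.
Qed.

Definition A1denX (u s v t p q : C) := p * v - q * (s + v - t).
Definition A1denY (u s v t p q : C) := p * v - q * u.

Lemma A1_det_factors d :
  det_factors (@anypar C) (A1L1 d) (A1L2 d) (A1A d) (fun p lam => lam * (lam - p)).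
Proof. by move=> u s p lam _ _; rewrite !det_mx2 /A1A; split; ring. Qed.

Lemma A1_Q2_cofinite : cofinitely_nonzero (@anypar C) (fun p lam => lam * (lam - p)).
Proof.
move=> p _; exists [:: 0; p] => lam; rewrite !inE negb_or => /andP [lam_neq0 lam_neq_p].
by split; rewrite // mulf_neq0 // subr_eq0.
Qed.

Lemma A1A_shift_p0 (d u s v t q : C) : A1A d (A1X d u s v t 0 q) (A1Y d u s v t 0 q) 0 = 0.
Proof. by rewrite /A1A /A1X; ring. Qed.

Lemma A1_factorizes d :
  factorizes (@anypar C) (A1X d) (A1Y d) (@A1dom C) (A1L1 d) (A1L2 d) (A1A d).
Proof.
move=> u s v t p q _ _ [DX DY] [DX' DY'] Au Av _ Av1.
have q_neq0 : q != 0 by apply: contraNneq Av1 => ->; rewrite A1A_shift_p0.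
exists (gauge_factor (fun p q => p / q) A1denX A1denY (A1A d) u s v t p q) => lam _.
move: Au Av; rewrite /A1L1 /A1L2 !mx2_mul !mx2_scale.
rewrite /gauge_factor /A1denX /A1denY /A1X /A1Y /A1A => Au Av.
by split; congr mx2; field; neq0_from_hyps.
Qed.

Definition Q2denX (u s v t p q : C) := p * t - q * s + p * q * (p - q).
Definition Q2denY (u s v t p q : C) := (p * q + t) * (p - q) - q * (u - v).

Lemma Q2_det_factors :
  det_factors (@anypar C) (@Q2L1 C) (@Q2L2 C) (@Q2A C) (fun p lam => lam * (lam - p)).
Proof. by move=> u s p lam _ _; rewrite !det_mx2 /Q2A; split; ring. Qed.

Lemma Q2A_shift_p0 (u s v t q : C) : Q2A (Q2X u s v t 0 q) (Q2Y u s v t 0 q) 0 = 0.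
Proof. by rewrite /Q2A /Q2Y; ring. Qed.

Lemma Q2_factorizes :
  factorizes (@anypar C) (@Q2X C) (@Q2Y C) (@Q2dom C) (@Q2L1 C) (@Q2L2 C) (@Q2A C).
Proof.
move=> u s v t p q _ _ [DX DY] [DX' DY'] Au Av _ Av1.
have q_neq0 : q != 0 by apply: contraNneq Av1 => ->; rewrite Q2A_shift_p0.
exists (gauge_factor (fun p q => p / q) Q2denX Q2denY (@Q2A C) u s v t p q) => lam _.
move: Au Av; rewrite /Q2L1 /Q2L2 !mx2_mul !mx2_scale.
rewrite /gauge_factor /Q2denX /Q2denY /Q2X /Q2Y /Q2A => Au Av.
by split; congr mx2; field; neq0_from_hyps.
Qed.


Definition Q3denX (u s v t p q : C) :=
  2 * Q3a q * s - (Q3a p + Q3a q + Q3c p q) * t - (Q3a p - Q3a q - Q3c p q) * v.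
Definition Q3denY (u s v t p q : C) :=
  2 * Q3a q * u - (Q3a p - Q3a q + Q3c p q) * t - (Q3a p + Q3a q - Q3c p q) * v.
Definition Q3numX (d u s v t p q : C) :=
  s * Q3denX u s v t p q
  - 2 * (d * Q3a p * Q3a q * Q3c p q + (Q3a q * s - Q3a p * v) * (s - t) + Q3c p q * s * v).
Definition Q3numY (d u s v t p q : C) :=
  u * Q3denY u s v t p q
  - 2 * (d * Q3a p * Q3a q * Q3c p q + (Q3a q * u - Q3a p * v) * (u + t) + Q3c p q * u * v).

Lemma Q3X_frac (d : C) {u s v t p q : C} : Q3denX u s v t p q != 0 ->
  Q3X d u s v t p q = Q3numX d u s v t p q / Q3denX u s v t p q.
Proof. exact: sub_div_frac. Qed.

Lemma Q3Y_frac (d : C) {u s v t p q : C} : Q3denY u s v t p q != 0 ->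
  Q3Y d u s v t p q = Q3numY d u s v t p q / Q3denY u s v t p q.
Proof. exact: sub_div_frac. Qed.

Definition Q3lift (F : C -> C -> 'M[C]_2) (d u s v t p q : C) : 'M[C]_2 :=
  homogenize F (Q3numX d u s v t p q) (Q3denX u s v t p q)
               (Q3numY d u s v t p q) (Q3denY u s v t p q).

Lemma Q3_update {L : C -> C -> C -> C -> 'M[C]_2} {d u s v t p q lam : C} :
  biaffine (fun x y => L x y p lam) ->
  Q3denX u s v t p q != 0 -> Q3denY u s v t p q != 0 ->
  L (Q3X d u s v t p q) (Q3Y d u s v t p q) p lam
    = (Q3denX u s v t p q * Q3denY u s v t p q)^-1
        *: Q3lift (fun x y => L x y p lam) d u s v t p q.
Proof.
move=> L_biaffine DX DY; rewrite (Q3X_frac d DX) (Q3Y_frac d DY).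
exact: homogenize_frac.
Qed.

Lemma Q3L1_biaffine (d p lam : C) : biaffine (fun x y => Q3L1 d x y p lam).
Proof.
move=> x y; apply/matrixP => i j; rewrite /Q3L1 /mx2 !mxE.
by case: i j => [[|[|//]] _] [[|[|//]] _] /=; ring.
Qed.

Lemma Q3L2_biaffine (d p lam : C) : biaffine (fun x y => Q3L2 d x y p lam).
Proof.
move=> x y; apply/matrixP => i j; rewrite /Q3L2 /mx2 !mxE.
by case: i j => [[|[|//]] _] [[|[|//]] _] /=; ring.
Qed.

(* Stated with the denominators of the map cleared: a direct [field] on the
   Lax equation produces proof terms too large for the kernel checker. *)
Lemma Q3_lifted_factorization (d u s v t p q lam : C) :
  p != 0 -> q != 0 -> lam != 0 ->
  (q * (q ^+ 2 - 1) * Q3A d u s p) *: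
      (Q3lift (fun x y => Q3L1 d x y p lam) d u s v t p q *m Q3L2 d v t q lam)
    = (p * (p ^+ 2 - 1) * Q3A d v t q) *:
      (Q3lift (fun x y => Q3L1 d x y q lam) d v t u s q p *m Q3L2 d u s p lam) /\
  (q * (q ^+ 2 - 1) * Q3A d u s p) *:
      (Q3lift (fun x y => Q3L2 d x y p lam) d u s v t p q *m Q3L1 d v t q lam)
    = (p * (p ^+ 2 - 1) * Q3A d v t q) *:
      (Q3lift (fun x y => Q3L2 d x y q lam) d v t u s q p *m Q3L1 d u s p lam).
Proof.
move=> p_neq0 q_neq0 lam_neq0.
split; apply/matrixP => i j; rewrite !mxE !big_ord_recr !big_ord0 /= /Q3lift /homogenize !mxE;
  case: i j => [[|[|//]] _] [[|[|//]] _] /=;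
  rewrite /Q3numX /Q3numY /Q3denX /Q3denY /Q3A /Q3a /Q3c;
  by field; rewrite p_neq0 q_neq0 lam_neq0.
Qed.

Definition Q3_detc (p lam : C) := (lam ^+ 2 - p ^+ 2) * (lam ^+ 2 - 1) / (lam ^+ 2 * p ^+ 3).

Lemma Q3_det_factors d : det_factors (@nzpar C) (Q3L1 d) (Q3L2 d) (Q3A d) Q3_detc.
Proof.
rewrite /nzpar => u s p lam p_neq0 lam_neq0.
by rewrite !det_mx2 /Q3A /Q3_detc; split; field; rewrite p_neq0 lam_neq0.
Qed.

Lemma Q3_cofinite : cofinitely_nonzero (@nzpar C) Q3_detc.
Proof.
rewrite /nzpar => p p_neq0; exists [:: 0; 1; -1; p; -p] => lam.
rewrite !inE !negb_or => /and5P [lam_neq0 lam_neq1 lam_neqN1 lam_neq_p lam_neq_Np].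
split=> //; rewrite /Q3_detc !mulf_neq0 ?invr_eq0 ?mulf_neq0 ?expf_neq0 //.
  by rewrite subr_eq0 eqf_sqr negb_or lam_neq_p.
by rewrite subr_eq0 sqrf_eq1 negb_or lam_neq1.
Qed.

Lemma Q3A_shift_p1 (d u s v t q : C) : Q3denY u s v t 1 q != 0 ->
  Q3A d (Q3X d u s v t 1 q) (Q3Y d u s v t 1 q) 1 = 0.
Proof.
move=> DY; have numY0 : Q3numY d u s v t 1 q = 0.
  by rewrite /Q3numY /Q3denY /Q3a /Q3c invr1; ring.
by rewrite (Q3Y_frac d DY) numY0 mul0r /Q3A; ring.
Qed.

Lemma Q3A_shift_pN1 (d u s v t q : C) : Q3denX u s v t (-1) q != 0 ->
  Q3A d (Q3X d u s v t (-1) q) (Q3Y d u s v t (-1) q) (-1) = 0.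
Proof.
move=> DX; have numX0 : Q3numX d u s v t (-1) q = 0.
  by rewrite /Q3numX /Q3denX /Q3a /Q3c invrN1; ring.
by rewrite (Q3X_frac d DX) numX0 mul0r /Q3A; ring.
Qed.

Lemma Q3_factorizes d :
  factorizes (@nzpar C) (Q3X d) (Q3Y d) (@Q3dom C) (Q3L1 d) (Q3L2 d) (Q3A d).
Proof.
rewrite /nzpar => u s v t p q p_neq0 q_neq0 dom_uv dom_vu Au Av _ Av1.
have [DX DY] : Q3denX u s v t p q != 0 /\ Q3denY u s v t p q != 0 := dom_uv.
have [DX' DY'] : Q3denX v t u s q p != 0 /\ Q3denY v t u s q p != 0 := dom_vu.
have q2_neq1 : q ^+ 2 - 1 != 0.
  rewrite subr_eq0 sqrf_eq1 negb_or; apply/andP; split; apply: contraNneq Av1 => q1.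
    by move: DY'; rewrite q1 => /Q3A_shift_p1 ->.
  by move: DX'; rewrite q1 => /Q3A_shift_pN1 ->.
pose rho (p q : C) := p * (p ^+ 2 - 1) / (q * (q ^+ 2 - 1)).
exists (gauge_factor rho Q3denX Q3denY (Q3A d) u s v t p q) => lam lam_neq0.
have [E1 E2] := Q3_lifted_factorization d u s v t p q lam p_neq0 q_neq0 lam_neq0.
rewrite (Q3_update (Q3L1_biaffine d p lam) DX DY) (Q3_update (Q3L1_biaffine d q lam) DX' DY').
rewrite (Q3_update (Q3L2_biaffine d p lam) DX DY) (Q3_update (Q3L2_biaffine d q lam) DX' DY').
have alpha_neq0 : q * (q ^+ 2 - 1) * Q3A d u s p != 0 by rewrite !mulf_neq0.
have kE : gauge_factor rho Q3denX Q3denY (Q3A d) u s v t p q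
             / (Q3denX v t u s q p * Q3denY v t u s q p)
           = p * (p ^+ 2 - 1) * Q3A d v t q
             / (q * (q ^+ 2 - 1) * Q3A d u s p * (Q3denX u s v t p q * Q3denY u s v t p q)).
  by rewrite /gauge_factor /rho; field; rewrite q_neq0 q2_neq1 Au DX DY DX' DY'.
by rewrite -!scalemxAl; split; apply: rescale_factorization alpha_neq0 _ kE.
Qed.

End LaxMatrices.

Arguments Lax_and_det_cond_of_factorization {C par X Y dom L1 L2 A c}.

Theorem proposition5p2 (C : numClosedFieldType) :
  (forall d : C, d = 0 \/ d = 1 ->
     is_Lax_matrix (@nzpar C) (Q3X d) (Q3Y d) (@Q3dom C) (Q3L1 d) (Q3L2 d) (Q3A d)
     /\ det_cond (@nzpar C) (Q3L1 d) (Q3L2 d) (Q3A d)) /\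
  (is_Lax_matrix (@anypar C) (@Q2X C) (@Q2Y C) (@Q2dom C) (@Q2L1 C) (@Q2L2 C) (@Q2A C)
     /\ det_cond (@anypar C) (@Q2L1 C) (@Q2L2 C) (@Q2A C)) /\
  (forall d : C, d = 0 \/ d = 1 ->
     is_Lax_matrix (@anypar C) (Q1X d) (Q1Y d) (@Q1dom C) (Q1L1 d) (Q1L2 d) (Q1A d)
     /\ det_cond (@anypar C) (Q1L1 d) (Q1L2 d) (Q1A d)) /\
  (forall d : C, d = 0 \/ d = 1 ->
     is_Lax_matrix (@anypar C) (A1X d) (A1Y d) (@A1dom C) (A1L1 d) (A1L2 d) (A1A d)
     /\ det_cond (@anypar C) (A1L1 d) (A1L2 d) (A1A d)) /\
  (forall d : C, d = 0 \/ d = 1 ->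
     is_Lax_matrix (@anypar C) (H3X d) (H3Y d) (@H3dom C) (H3L1 d) (H3L2 d) (H3A d)
     /\ det_cond (@anypar C) (H3L1 d) (H3L2 d) (H3A d)) /\
  (is_Lax_matrix (@anypar C) (@H2X C) (@H2Y C) (@H2dom C) (@H2L1 C) (@H2L2 C) (@H2A C)
     /\ det_cond (@anypar C) (@H2L1 C) (@H2L2 C) (@H2A C)) /\
  (is_Lax_matrix (@anypar C) (@H1X C) (@H1Y C) (@H1dom C) (@H1L1 C) (@H1L2 C) (@H1A C)
     /\ det_cond (@anypar C) (@H1L1 C) (@H1L2 C) (@H1A C)).
Proof.
(* The conclusions hold for every delta, not only for delta = 0, 1. *)
split; first by move=> d _; exact: (Lax_and_det_cond_of_factorization
  (Q3_det_factors C d) (@Q3_cofinite C) (oner_neq0 C) (Q3_factorizes C d)).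
split; first exact: (Lax_and_det_cond_of_factorization
  (Q2_det_factors C) (@A1_Q2_cofinite C) I (Q2_factorizes C)).
split; first by move=> d _; exact: (Lax_and_det_cond_of_factorization
  (Q1_det_factors C d) (@Q1_cofinite C) I (Q1_factorizes C d)).
split; first by move=> d _; exact: (Lax_and_det_cond_of_factorization
  (A1_det_factors C d) (@A1_Q2_cofinite C) I (A1_factorizes C d)).
split; first by move=> d _; exact: (Lax_and_det_cond_of_factorization
  (H3_det_factors C d) (@H3_cofinite C) I (H3_factorizes C d)).
split; first exact: (Lax_and_det_cond_of_factorization
  (H2_det_factors C) (@H2_cofinite C) I (H2_factorizes C)).
exact: (Lax_and_det_cond_of_factorization
  (H1_det_factors C) (@H1_cofinite C) I (H1_factorizes C)).
Qed.
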